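(* Let $\tilde L$ be a minimum-size counterexample. Then the greatest element $1_{\tilde L}$ is join-reducible in $\tilde L$, i.e. it upper covers at least two elements.
   Context: For a poset $P$, $x$ upper covers $y$ if $y<x$ with nothing strictly between. Join-irreducible: upper covers exactly one element; join-reducible: upper covers more than one element. For $x\in P$, ${\uparrow}x=\{y: x\le y\}$. A counterexample is a finite lattice $L$ with $|L|>1$ in which every join-irreducible $j$ satisfies $|{\uparrow}j|>|L|/2$; a minimum-size counterexample is a counterexample $\tilde L$ such that no counterexample has fewer elements. *)

From mathcomp Require Import all_boot all_order.
Set Implicit Arguments. Unset Strict Implicit. Unset Printing Implicit Defensive.
Import Order.TTheory.
Local Open Scope order_scope.

Definition ucovers {d} {T : finPOrderType d} (x y : T) : bool :=
  (y < x) && [forall z : T, ~~ ((y < z) && (z < x))].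

Definition lower_covers {d} {T : finPOrderType d} (x : T) : {set T} :=
  [set y | ucovers x y].

Definition join_irreducible {d} {T : finPOrderType d} (x : T) : bool :=
  #|lower_covers x| == 1%N.

Definition join_reducible {d} {T : finPOrderType d} (x : T) : bool :=
  (1 < #|lower_covers x|)%N.

Definition upset {d} {T : finPOrderType d} (x : T) : {set T} := [set y | x <= y].

(* counterexample: finite lattice, |L| > 1, every join-irreducible j has
   |up j| > |L|/2, i.e. 2 |up j| > |L| *)
Definition counterexample {d} (L : finLatticeType d) : Prop :=
  (1 < #|L|)%N /\
  forall j : L, join_irreducible j -> (#|L| < 2 * #|upset j|)%N.

Definition min_counterexample {d} (L : finLatticeType d) : Prop :=
  counterexample L /\
  forall (d' : Order.disp_t) (L' : finLatticeType d'),
    counterexample L' -> (#|L| <= #|L'|)%N.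

(* Since the lattice has a second element, some x < t exists,
   and by finiteness t then covers some element.  If t covered exactly one element it would be
   join-irreducible with up-set {t}, and the counterexample condition would
   force |L| < 2. *)
From mathcomp Require Import all_boot all_order.
Import Order.TTheory.
Set Implicit Arguments.
Unset Strict Implicit.
Unset Printing Implicit Defensive.
Local Open Scope order_scope.

Section Covers.
Variables (d : Order.disp_t) (T : finPOrderType d).

Lemma upset_top (t : T) : (forall x : T, x <= t) -> upset t = [set t].
Proof.
move=> t_top; apply/setP => w; rewrite !inE.
by apply/idP/eqP => [tw | ->]; [apply/le_anti; rewrite tw t_top |].
Qed.

Lemma card_gt1_lt_top (t : T) :
  (1 < #|T|)%N -> (forall x : T, x <= t) -> exists x : T, x < t.
Proof.
move=> card_gt1 t_top.
have /card_gt1P [x [y [_ _ neq_xy]]] : (1 < #|[set: T]|)%N by rewrite cardsT.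
have [eq_xt | neq_xt] := eqVneq x t.
  by exists y; rewrite lt_neqAle t_top andbT -eq_xt eq_sym.
by exists x; rewrite lt_neqAle neq_xt t_top.
Qed.

(* An element y < t with the smallest up-set is covered by t. *)
Lemma lt_ucovers (x t : T) : x < t -> exists y, ucovers t y.
Proof.
move=> lt_xt.
have [y lt_yt ymin] := @arg_minnP _ x (fun y => y < t) (fun y => #|upset y|) lt_xt.
exists y; rewrite /ucovers lt_yt; apply/forallP => z.
apply/negP => /andP [lt_yz lt_zt].
have upset_proper : upset z \proper upset y.
  rewrite properE; apply/andP; split.
    by apply/subsetP => w; rewrite !inE; apply: le_trans (ltW lt_yz).
  by apply/subsetPn; exists y; rewrite !inE // lt_geF.
by have := ymin z lt_zt; rewrite leqNgt (proper_card upset_proper).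
Qed.

End Covers.

Lemma counterexample_top_join_reducible (d : Order.disp_t) (L : finLatticeType d) :
  counterexample L -> forall t : L, (forall x : L, x <= t) -> join_reducible t.
Proof.
move=> [card_gt1 big_upsets] t t_top.
have [x lt_xt] := card_gt1_lt_top card_gt1 t_top.
have [y cov_ty] := lt_ucovers lt_xt.
have covers_gt0 : (0 < #|lower_covers t|)%N.
  by apply/card_gt0P; exists y; rewrite inE.
rewrite /join_reducible ltn_neqAle covers_gt0 andbT eq_sym.
apply/negP => join_irr.
have := big_upsets t join_irr.
by rewrite upset_top // cards1 muln1 ltnNge card_gt1.
Qed.

Theorem corollary2p4 (d : Order.disp_t) (L : finLatticeType d) :
  min_counterexample L ->
  forall t : L, (forall x : L, x <= t) -> join_reducible t.
Proof. by move=> [counter_L _]; exact: counterexample_top_join_reducible. Qed.
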